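(* Let $a\ne0$ and let $A,B\in\mathbb R$ not both zero. Define $h:\mathbb R\to\mathbb R$, $h(x):=A\cosh(ax)\cos(ax)-B\sinh(ax)\sin(ax)$. Then the local extrema of $h$ are isolated and their absolute values are strictly increasing on the nonnegative real axis: $|h(x_1)|<|h(x_2)|$ whenever $0\le x_1<x_2$ are local extremum points of $h$. *)

From Stdlib Require Import Reals.
Open Scope R_scope.

Definition is_local_max (f : R -> R) (x : R) : Prop :=
  exists d : R, 0 < d /\ forall y : R, Rabs (y - x) < d -> f y <= f x.

Definition is_local_min (f : R -> R) (x : R) : Prop :=
  exists d : R, 0 < d /\ forall y : R, Rabs (y - x) < d -> f x <= f y.

Definition is_local_extremum (f : R -> R) (x : R) : Prop :=
  is_local_max f x \/ is_local_min f x.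

Definition hfun (a A B : R) (x : R) : R :=
  A * cosh (a * x) * cos (a * x) - B * sinh (a * x) * sin (a * x).

(* Put t = a x, so that hfun a A B x = hnorm A B (a x) with
   hnorm' = dhnorm = (A - B) sinh t cos t - (A + B) cosh t sin t and
   dhnorm' = -2 (A sinh t sin t + B cosh t cos t); local extrema sit at zeros of dhnorm.
   For t <> 0, dhnorm = dhnorm' = 0 is a linear system in (A, B) with determinant
   -(sinh t cosh t - sin t cos t) <> 0, so these zeros are simple, hence isolated; the
   one exception, t = 0 with B = 0, is isolated because A (sinh t cos t - cosh t sin t)
   has no other zero in (-pi, pi).
   At a zero t <> 0 of dhnorm one finds hnorm(t)^2 = (A^2 + B^2)/2 * K(t) with
   K = (sinh t cosh t + sin t cos t)^2 / (sinh^2 t + sin^2 t). K is even, strictly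
   increasing on (0, oo) and > 2 there, while hnorm(0)^2 = A^2 <= A^2 + B^2; so |hnorm|
   grows with |t| along critical points. *)

From Coquelicot Require Import Coquelicot.
From Stdlib Require Import Reals Lra Nsatz.
Open Scope R_scope.

Lemma cosh_sqr x : cosh x * cosh x = 1 + sinh x * sinh x.
Proof. unfold cosh, sinh. rewrite exp_Ropp. pose proof (exp_pos x). field. lra. Qed.

Lemma cos_sqr x : cos x * cos x = 1 - sin x * sin x.
Proof. pose proof (sin2_cos2 x). unfold Rsqr in H. lra. Qed.

Lemma sinh_opp x : sinh (- x) = - sinh x.
Proof. unfold sinh. rewrite Ropp_involutive. field. Qed.

Lemma cosh_opp x : cosh (- x) = cosh x.
Proof. unfold cosh. rewrite Ropp_involutive. field. Qed.

Lemma sinh_pos x : 0 < x -> 0 < sinh x.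
Proof. intro Hx. rewrite <- sinh_0. now apply sinh_lt. Qed.

Lemma sinh_neq0 x : x <> 0 -> sinh x <> 0.
Proof.
  intros Hx. rewrite <- sinh_0. destruct (Rtotal_order x 0) as [H|[H|H]].
  - apply Rlt_not_eq, sinh_lt, H.
  - contradiction.
  - apply Rgt_not_eq, sinh_lt, H.
Qed.

Lemma cosh_gt_1 x : 0 < x -> 1 < cosh x.
Proof.
  intro Hx. pose proof (cosh_sqr x). pose proof (sinh_pos x Hx).
  assert (0 < cosh x) by (unfold cosh; pose proof (exp_pos x); pose proof (exp_pos (- x)); lra).
  nra.
Qed.

Lemma strict_incr_of_derive_pos (f f' : R -> R) a b : a < b ->
  (forall c, a <= c <= b -> is_derive f c (f' c)) ->
  (forall c, a < c < b -> 0 < f' c) -> f a < f b.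
Proof.
  intros Hab Hd Hp.
  destruct (MVT_cor2 f f' a b Hab) as [c [Hfc Hc]].
  { intros c Hc. apply is_derive_Reals, Hd, Hc. }
  pose proof (Hp c Hc). nra.
Qed.

Lemma sin_lt_sinh t : 0 < t -> Rabs (sin t) < sinh t.
Proof.
  intro Ht.
  assert (Hd : forall e : R, e = 1 \/ e = -1 ->
            (fun x => sinh x + e * sin x) 0 < (fun x => sinh x + e * sin x) t).
  { intros e He.
    apply (strict_incr_of_derive_pos (fun x => sinh x + e * sin x)
             (fun x => cosh x + e * cos x)); auto.
    - intros c _. auto_derive; auto. ring.
    - intros c Hc. pose proof (cosh_gt_1 c (proj1 Hc)). pose proof (COS_bound c).
      destruct He; subst; lra. }
  pose proof (Hd 1 (or_introl eq_refl)). pose proof (Hd (-1) (or_intror eq_refl)).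
  simpl in *. rewrite sinh_0, sin_0 in *. unfold Rabs. destruct (Rcase_abs (sin t)); lra.
Qed.

Definition Mf t := sinh t * cosh t + sin t * cos t.
Definition Df t := sinh t * cosh t - sin t * cos t.
Definition Ef t := sinh t * sinh t + sin t * sin t.
Definition Kf t := Mf t * Mf t / Ef t.

Lemma Mf_Df_pos t : 0 < t -> 0 < Mf t /\ 0 < Df t.
Proof.
  intro Ht. pose proof (sin_lt_sinh t Ht). pose proof (cosh_gt_1 t Ht).
  assert (Hsc : Rabs (sin t * cos t) <= Rabs (sin t)).
  { rewrite Rabs_mult. pose proof (Rabs_pos (sin t)).
    assert (Rabs (cos t) <= 1) by (apply Rabs_le, COS_bound). nra. }
  pose proof (Rabs_pos (sin t)).
  pose proof (Rle_abs (sin t * cos t)). pose proof (Rabs_maj2 (sin t * cos t)).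
  unfold Mf, Df. split; nra.
Qed.

Lemma sin_sqr_lt_sinh_sqr t : 0 < t -> sin t * sin t < sinh t * sinh t.
Proof.
  intro Ht. apply (Rsqr_lt_abs_1 (sin t) (sinh t)).
  rewrite (Rabs_right (sinh t)) by (left; apply sinh_pos, Ht). apply sin_lt_sinh, Ht.
Qed.

Lemma Ef_pos t : t <> 0 -> 0 < Ef t.
Proof.
  intro Ht. pose proof (sinh_neq0 t Ht). unfold Ef.
  assert (0 < sinh t * sinh t) by (apply Rsqr_pos_lt; auto). nra.
Qed.

Lemma Df_neq0 t : t <> 0 -> Df t <> 0.
Proof.
  intro Ht. destruct (Rtotal_order t 0) as [H|[H|H]]; [|contradiction|].
  - assert (E : Df t = - Df (- t)).
    { unfold Df. rewrite sinh_opp, cosh_opp, sin_neg, cos_neg. ring. }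
    pose proof (Mf_Df_pos (- t)). lra.
  - pose proof (Mf_Df_pos t). lra.
Qed.

Lemma Kf_abs t : Kf (Rabs t) = Kf t.
Proof.
  unfold Rabs. destruct (Rcase_abs t); auto.
  unfold Kf, Mf, Ef. rewrite sinh_opp, cosh_opp, sin_neg, cos_neg. f_equal; ring.
Qed.

Lemma Kf_gt_2 t : 0 < t -> 2 < Kf t.
Proof.
  intro Ht.
  assert (H : (fun x => Mf x * Mf x - 2 * Ef x) 0 < (fun x => Mf x * Mf x - 2 * Ef x) t).
  { apply (strict_incr_of_derive_pos (fun x => Mf x * Mf x - 2 * Ef x)
            (fun x => 4 * Mf x * (sinh x * sinh x - sin x * sin x))); auto.
    - intros c _. pose proof (cosh_sqr c). pose proof (cos_sqr c).
      unfold Mf, Ef. auto_derive; auto. nsatz.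
    - intros c Hc. pose proof (Mf_Df_pos c (proj1 Hc)).
      pose proof (sin_sqr_lt_sinh_sqr c (proj1 Hc)). nra. }
  simpl in H. replace (Mf 0 * Mf 0 - 2 * Ef 0) with 0 in H
    by (unfold Mf, Ef; rewrite sinh_0, sin_0; ring).
  pose proof (Ef_pos t (Rgt_not_eq _ _ Ht)).
  unfold Kf. apply (Rmult_lt_reg_r (Ef t)); [assumption|].
  replace (Mf t * Mf t / Ef t * Ef t) with (Mf t * Mf t) by (field; lra). lra.
Qed.

(* K' = 2 M (M' E - M^2) / E^2 since E' = 2 M, and M' E - M^2 = D^2
   because cosh^2 - sinh^2 = cos^2 + sin^2 = 1. *)
Lemma is_derive_Kf t : t <> 0 -> is_derive Kf t (2 * Mf t * (Df t * Df t) / (Ef t * Ef t)).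
Proof.
  intro Ht. pose proof (Ef_pos t Ht). pose proof (cosh_sqr t). pose proof (cos_sqr t).
  unfold Kf, Mf, Df, Ef in *. auto_derive; [lra|].
  field_simplify_eq; [simpl; nsatz | lra].
Qed.

Lemma Kf_increasing t1 t2 : 0 < t1 -> t1 < t2 -> Kf t1 < Kf t2.
Proof.
  intros H1 H12.
  apply (strict_incr_of_derive_pos Kf (fun x => 2 * Mf x * (Df x * Df x) / (Ef x * Ef x))); auto.
  - intros c Hc. apply is_derive_Kf. lra.
  - intros c Hc. destruct (Mf_Df_pos c ltac:(lra)). pose proof (Ef_pos c ltac:(lra)).
    apply Rdiv_lt_0_compat; apply Rmult_lt_0_compat; nra.
Qed.

Definition hnorm A B t := A * cosh t * cos t - B * sinh t * sin t.
Definition dhnorm A B t := (A - B) * sinh t * cos t - (A + B) * cosh t * sin t.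
Definition ddhnorm A B t := -2 * (A * sinh t * sin t + B * cosh t * cos t).

Lemma is_derive_hfun a A B x : is_derive (hfun a A B) x (a * dhnorm A B (a * x)).
Proof. unfold hfun, dhnorm. auto_derive; auto. ring. Qed.

Lemma is_derive_dhnorm A B t : is_derive (dhnorm A B) t (ddhnorm A B t).
Proof. unfold dhnorm, ddhnorm. auto_derive; auto. ring. Qed.

Lemma local_extremum_derive_0 f x l : is_local_extremum f x -> is_derive f x l -> l = 0.
Proof.
  intros He Hd. apply is_derive_Reals in Hd.
  set (pr := exist (fun l => derivable_pt_lim f x l) l Hd : derivable_pt f x).
  change l with (derive_pt f x pr).
  destruct He as [[d [Hd0 Hm]] | [d [Hd0 Hm]]].
  - apply (deriv_maximum f (x - d) (x + d)); try lra.
    intros y H1 H2. apply Hm. apply Rabs_def1; lra.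
  - apply (deriv_minimum f (x - d) (x + d)); try lra.
    intros y H1 H2. apply Hm. apply Rabs_def1; lra.
Qed.

Lemma hfun_extremum_crit a A B x :
  a <> 0 -> is_local_extremum (hfun a A B) x -> dhnorm A B (a * x) = 0.
Proof.
  intros ha He. pose proof (local_extremum_derive_0 _ _ _ He (is_derive_hfun a A B x)) as E.
  apply Rmult_integral in E. destruct E; [contradiction | assumption].
Qed.

Definition punctured_zero_free (g : R -> R) (x : R) : Prop :=
  exists d, 0 < d /\ forall y, 0 < Rabs (y - x) < d -> g y <> 0.

Lemma punctured_zero_free_of_derive g x l :
  is_derive g x l -> l <> 0 -> g x = 0 -> punctured_zero_free g x.
Proof.
  intros Hd Hl Hg. apply is_derive_Reals in Hd.
  destruct (Hd (Rabs l) (Rabs_pos_lt l Hl)) as [del Hdel].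
  exists del. split; [apply cond_pos|]. intros y [Hy1 Hy2] Hgy.
  assert (Hh : y - x <> 0) by (intro E; rewrite E, Rabs_R0 in Hy1; lra).
  specialize (Hdel (y - x) Hh Hy2).
  replace (x + (y - x)) with y in Hdel by ring. rewrite Hgy, Hg in Hdel.
  replace ((0 - 0) / (y - x) - l) with (- l) in Hdel by (field; auto).
  rewrite Rabs_Ropp in Hdel. lra.
Qed.

Lemma punctured_zero_free_scale g a x :
  a <> 0 -> punctured_zero_free g (a * x) -> punctured_zero_free (fun y => g (a * y)) x.
Proof.
  intros ha [d [Hd Hg]]. pose proof (Rabs_pos_lt a ha).
  exists (d / Rabs a). split; [apply Rdiv_lt_0_compat; auto|].
  intros y [Hy1 Hy2]. apply Hg.
  replace (a * y - a * x) with (a * (y - x)) by ring. rewrite Rabs_mult. split.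
  - apply Rmult_lt_0_compat; auto.
  - apply (Rmult_lt_compat_l (Rabs a)) in Hy2; auto.
    replace (Rabs a * (d / Rabs a)) with d in Hy2 by (field; lra). exact Hy2.
Qed.

Lemma lin2_homogeneous_trivial x y a b c d :
  x * a + y * b = 0 -> x * c + y * d = 0 -> a * d - b * c <> 0 -> x = 0 /\ y = 0.
Proof.
  intros H1 H2 Hdet.
  assert (Hx : x * (a * d - b * c) = 0).
  { replace (x * (a * d - b * c)) with (d * (x * a + y * b) - b * (x * c + y * d)) by ring.
    rewrite H1, H2. ring. }
  assert (Hy : y * (a * d - b * c) = 0).
  { replace (y * (a * d - b * c)) with (a * (x * c + y * d) - c * (x * a + y * b)) by ring.
    rewrite H1, H2. ring. }
  split; [destruct (Rmult_integral _ _ Hx) | destruct (Rmult_integral _ _ Hy)]; tauto.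
Qed.

Lemma ddhnorm_neq0 A B t : ~ (A = 0 /\ B = 0) -> dhnorm A B t = 0 ->
  t <> 0 \/ B <> 0 -> ddhnorm A B t <> 0.
Proof.
  intros HAB HG Ht HGp. destruct (Req_dec t 0) as [E|E].
  - subst t. unfold ddhnorm in HGp. rewrite sinh_0, cosh_0, sin_0, cos_0 in HGp.
    destruct Ht; lra.
  - apply HAB, (lin2_homogeneous_trivial A B
      (sinh t * cos t - cosh t * sin t) (- (sinh t * cos t + cosh t * sin t))
      (sinh t * sin t) (cosh t * cos t)).
    + unfold dhnorm in HG. lra.
    + unfold ddhnorm in HGp. lra.
    + pose proof (Df_neq0 t E) as HD. pose proof (cosh_sqr t). pose proof (cos_sqr t).
      intro Hdet. apply HD. unfold Df. nsatz.
Qed.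

Lemma sinh_cos_lt_cosh_sin t : 0 < t < PI -> sinh t * cos t < cosh t * sin t.
Proof.
  intros [H1 H2].
  assert (H : (fun x => cosh x * sin x - sinh x * cos x) 0 <
              (fun x => cosh x * sin x - sinh x * cos x) t).
  { apply (strict_incr_of_derive_pos (fun x => cosh x * sin x - sinh x * cos x)
      (fun x => 2 * sinh x * sin x)); auto.
    - intros c _. auto_derive; auto. ring.
    - intros c Hc. pose proof (sinh_pos c (proj1 Hc)).
      pose proof (sin_gt_0 c (proj1 Hc) ltac:(lra)). nra. }
  simpl in H. rewrite sinh_0, sin_0 in H. lra.
Qed.

Lemma dhnorm_B0_neq0 A t : A <> 0 -> 0 < Rabs t < PI -> dhnorm A 0 t <> 0.
Proof.
  intros HA Ht E.
  assert (Hp : sinh t * cos t - cosh t * sin t = 0).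
  { unfold dhnorm in E. apply (Rmult_eq_reg_l A); auto. lra. }
  unfold Rabs in Ht. destruct (Rcase_abs t).
  - pose proof (sinh_cos_lt_cosh_sin (- t) ltac:(lra)).
    rewrite sinh_opp, cosh_opp, sin_neg, cos_neg in H. lra.
  - pose proof (sinh_cos_lt_cosh_sin t ltac:(lra)). lra.
Qed.

Lemma dhnorm_zero_isolated A B t : ~ (A = 0 /\ B = 0) -> dhnorm A B t = 0 ->
  punctured_zero_free (dhnorm A B) t.
Proof.
  intros HAB HG.
  assert (Hcase : t = 0 /\ B = 0 \/ t <> 0 \/ B <> 0)
    by (destruct (Req_dec t 0), (Req_dec B 0); tauto).
  destruct Hcase as [[-> ->] | Hnd].
  - exists PI. split; [apply PI_RGT_0|].
    intros y Hy. rewrite Rminus_0_r in Hy. apply dhnorm_B0_neq0; tauto.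
  - apply (punctured_zero_free_of_derive _ _ _ (is_derive_dhnorm A B t)); auto.
    apply ddhnorm_neq0; auto.
Qed.

(* (A, -B) orthogonal to (p, q) forces (A, -B) = l (q, -p) with l^2 (p^2 + q^2) = A^2 + B^2. *)
Lemma sqr_dot_orthogonal A B p q u v : A * p - B * q = 0 -> p * p + q * q <> 0 ->
  (A * u - B * v) ^ 2 * (p * p + q * q) = (A * A + B * B) * (u * q - v * p) ^ 2.
Proof.
  intros H Hn. apply (Rmult_eq_reg_r (p * p + q * q)); auto. simpl. nsatz.
Qed.

Lemma hnorm_crit_sqr A B t : dhnorm A B t = 0 -> t <> 0 ->
  hnorm A B t ^ 2 = (A * A + B * B) / 2 * Kf t.
Proof.
  intros HG Ht. pose proof (Ef_pos t Ht). pose proof (cosh_sqr t). pose proof (cos_sqr t).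
  set (p := sinh t * cos t - cosh t * sin t).
  set (q := sinh t * cos t + cosh t * sin t).
  assert (Hpq : p * p + q * q = 2 * Ef t) by (unfold p, q, Ef; nsatz).
  assert (Huv : cosh t * cos t * q - sinh t * sin t * p = Mf t) by (unfold p, q, Mf; nsatz).
  assert (Hsq : hnorm A B t ^ 2 * (2 * Ef t) = (A * A + B * B) * Mf t ^ 2).
  { rewrite <- Hpq, <- Huv. unfold hnorm.
    replace (A * cosh t * cos t - B * sinh t * sin t) with
      (A * (cosh t * cos t) - B * (sinh t * sin t)) by ring.
    apply sqr_dot_orthogonal; [unfold dhnorm in HG; unfold p, q; lra | lra]. }
  unfold Kf. apply (Rmult_eq_reg_r (2 * Ef t)); [|lra]. rewrite Hsq. field. lra.
Qed.

Lemma hnorm_crit_abs_lt A B t1 t2 : ~ (A = 0 /\ B = 0) ->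
  dhnorm A B t1 = 0 -> dhnorm A B t2 = 0 -> Rabs t1 < Rabs t2 ->
  Rabs (hnorm A B t1) < Rabs (hnorm A B t2).
Proof.
  intros HAB G1 G2 H12.
  assert (HW : 0 < A * A + B * B)
    by (destruct (Req_dec A 0), (Req_dec B 0); try tauto; nra).
  assert (Ht2 : t2 <> 0) by (intros ->; rewrite Rabs_R0 in H12; pose proof (Rabs_pos t1); lra).
  apply Rsqr_lt_abs_0. rewrite !Rsqr_pow2.
  rewrite (hnorm_crit_sqr A B t2), <- (Kf_abs t2) by assumption.
  destruct (Req_dec t1 0) as [->|Ht1].
  - pose proof (Kf_gt_2 (Rabs t2) (Rabs_pos_lt t2 Ht2)).
    unfold hnorm. rewrite cosh_0, cos_0, sinh_0, sin_0. nra.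
  - rewrite (hnorm_crit_sqr A B t1), <- (Kf_abs t1) by assumption.
    apply Rmult_lt_compat_l; [lra|]. apply Kf_increasing; auto. apply Rabs_pos_lt, Ht1.
Qed.

Theorem propositionC2 (a A B : R) (ha : a <> 0) (hAB : ~ (A = 0 /\ B = 0)) :
  (forall x : R, is_local_extremum (hfun a A B) x ->
     exists d : R, 0 < d /\
       forall y : R, 0 < Rabs (y - x) < d -> ~ is_local_extremum (hfun a A B) y) /\
  (forall x1 x2 : R, 0 <= x1 -> x1 < x2 ->
     is_local_extremum (hfun a A B) x1 -> is_local_extremum (hfun a A B) x2 ->
     Rabs (hfun a A B x1) < Rabs (hfun a A B x2)).
Proof.
  split.
  - intros x Hx.
    destruct (punctured_zero_free_scale (dhnorm A B) a x ha
                (dhnorm_zero_isolated A B _ hAB (hfun_extremum_crit a A B x ha Hx)))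
      as [d [Hd Hiso]].
    exists d. split; auto. intros y Hy Hey.
    exact (Hiso y Hy (hfun_extremum_crit a A B y ha Hey)).
  - intros x1 x2 H1 H12 He1 He2.
    apply (hnorm_crit_abs_lt A B); auto using hfun_extremum_crit.
    rewrite !Rabs_mult, (Rabs_right x1), (Rabs_right x2) by lra.
    apply Rmult_lt_compat_l; auto. apply Rabs_pos_lt, ha.
Qed.
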